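(* Let $R$ be any one of $Cond$, $Lex$, $Mini$, and let $R_{CB}$ be its confirmation-biased version. Then $R$ is strictly more powerful than $R_{CB}$, in the following sense: (i) for every stubbornness function $D$ and every epistemic space $\mathbb{S}$, if $\mathbb{S}$ is identifiable in the limit by $R_{CB}$ (with stubbornness function $D$), then $\mathbb{S}$ is identifiable in the limit by $R$; (ii) there exist an epistemic space $\mathbb{S}$ and a stubbornness function $D$ such that $\mathbb{S}$ is identifiable in the limit by $R$ but not by $R_{CB}$ (with stubbornness function $D$).
   Context: An epistemic space is a pair $\mathbb{S}=(S,\mathcal{O})$ where $S$ is a non-empty, at most countable set of worlds and $\mathcal{O}\subseteq\mathcal{P}(S)$ is a set of observables. A data stream is an infinite sequence $\vec O=(O_0,O_1,\ldots)$ with each $O_i\in\mathcal{O}$; $\vec O[n]$ denotes its initial segment $(O_0,\ldots,O_{n-1})$. A stream is sound for $s\in S$ if $s\in O_n$ for all $n$, and complete for $s$ if every $O\in\mathcal{O}$ with $s\in O$ occurs in $\vec O$. A plausibility space is $\mathbb{B}=(S,\mathcal{O},\preceq)$ with $\preceq$ a total preorder on $S$; $\min_\preceq X$ denotes the set of $\preceq$-minimal elements of $X$. One-step revision methods, for $\mathbb{B}=(S,\mathcal{O},\preceq)$ and a proposition $p\subseteq S$ (with $\bar p=S\setminus p$): - $Cond_1(\mathbb{B},p)=(S\cap p,\mathcal{O},\preceq\cap((S\cap p)\times(S\cap p)))$. - $Lex_1(\mathbb{B},p)=(S,\mathcal{O},\preceq')$ where $t\preceq' w$ iff ($t,w\in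 p$ and $t\preceq w$) or ($t,w\in\bar p$ and $t\preceq w$) or ($t\in p$ and $w\notin p$). - $Mini_1(\mathbb{B},p)=(S,\mathcal{O},\preceq')$ where, with $\min_p=\min_\preceq(S\cap p)$: if $t\in\min_p$ and $w\notin\min_p$ then $t\preceq' w$; otherwise $t\preceq' w$ iff $t\preceq w$. A stubbornness function is any $D:\mathcal{P}(S)\to\mathbb{N}$. For a one-step method $R_1$, the confirmation-biased iterated method is defined by $R_{CB}(\mathbb{B},\lambda)=\mathbb{B}$ ($\lambda$ the empty sequence) and $R_{CB}(\mathbb{B},\sigma\cdot p)=R_1(R_{CB}(\mathbb{B},\sigma),p)$ if $\#p(\sigma)\ge D(\bar p)$, and $R_{CB}(\mathbb{B},\sigma\cdot p)=R_{CB}(\mathbb{B},\sigma)$ otherwise, where $\#p(\sigma)$ is the number of occurrences of $p$ in the finite sequence $\sigma$. The unbiased iterated method $R$ is given by $R(\mathbb{B},\lambda)=\mathbb{B}$, $R(\mathbb{B},\sigma\cdot p)=R_1(R(\mathbb{B},\sigma),p)$. $Cond,Lex,Mini$ (resp. $Cond_{CB},Lex_{CB},Mini_{CB}$) arise from $R_1=Cond_1,Lex_1,Mini_1$. For an iterated method $M$ and prior $\preceq$, the learner $L^\preceq_M$ maps a finite data sequence $\sigma$ to $\min_{\preceq'}S'$ where $M((S,\mathcal{O},\preceq),\sigma)=(S',\mathcal{O},\preceq')$. A world $s$ is identified in the limit by a learner $L$ if for every stream $\vec O$ sound and complete for $s$ there is $k$ with $L(\vec O[n])=\{s\}$ for all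 $n\ge k$; $\mathbb{S}$ is identified by $L$ if every $s\in S$ is; $\mathbb{S}$ is identifiable in the limit by the method $M$ if there is a total preorder $\preceq$ on $S$ such that $L^\preceq_M$ identifies $\mathbb{S}$ in the limit. *)

From Stdlib Require Import List Arith ClassicalDescription.
Import ListNotations.

Set Implicit Arguments.

(* An epistemic space (S, O): the set of worlds S is the carrier type W itself
   (assumed non-empty and at most countable), observables are O : (W -> Prop) -> Prop. *)
Definition at_most_countable (W : Type) : Prop :=
  exists f : W -> nat, forall x y, f x = f y -> x = y.

Definition total_preorder (W : Type) (le : W -> W -> Prop) : Prop :=
  (forall x, le x x) /\
  (forall x y z, le x y -> le y z -> le x z) /\
  (forall x y, le x y \/ le y x).

(* A plausibility state: current set of worlds S' and preorder on it
   (the observables O never change, so they are not stored). *)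
Record pstate (W : Type) := PState { st_S : W -> Prop; st_le : W -> W -> Prop }.

Definition minset (W : Type) (le : W -> W -> Prop) (X : W -> Prop) : W -> Prop :=
  fun x => X x /\ forall y, X y -> le y x -> le x y.

Definition cond1 (W : Type) (B : pstate W) (p : W -> Prop) : pstate W :=
  PState (fun w => st_S B w /\ p w)
         (fun t w => (st_S B t /\ p t) /\ (st_S B w /\ p w) /\ st_le B t w).

Definition lex1 (W : Type) (B : pstate W) (p : W -> Prop) : pstate W :=
  PState (st_S B)
         (fun t w => (p t /\ p w /\ st_le B t w) \/
                     (~ p t /\ ~ p w /\ st_le B t w) \/
                     (p t /\ ~ p w)).

Definition mini1 (W : Type) (B : pstate W) (p : W -> Prop) : pstate W :=
  let m := minset (st_le B) (fun w => st_S B w /\ p w) in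
  PState (st_S B)
         (fun t w => (m t /\ ~ m w) \/
                     (~ (m t /\ ~ m w) /\ ~ (~ m t /\ m w) /\ st_le B t w)).

Inductive method := MCond | MLex | MMini.

Definition one_step (m : method) (W : Type) : pstate W -> (W -> Prop) -> pstate W :=
  match m with
  | MCond => @cond1 W
  | MLex => @lex1 W
  | MMini => @mini1 W
  end.

Definition iter_rev (m : method) (W : Type) (B : pstate W) (sigma : list (W -> Prop))
  : pstate W := fold_left (@one_step m W) sigma B.

Fixpoint occ (W : Type) (p : W -> Prop) (sigma : list (W -> Prop)) : nat :=
  match sigma with
  | [] => 0
  | q :: s => (if excluded_middle_informative (q = p) then 1 else 0) + occ p s
  end.

Definition compl (W : Type) (p : W -> Prop) : W -> Prop := fun w => ~ p w.

(* Confirmation-biased iterated method, computed on the reversed sequence: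
   cb (p :: rsigma) handles sigma . p where rsigma = rev sigma. *)
Fixpoint cb_rev (m : method) (W : Type) (D : (W -> Prop) -> nat) (B : pstate W)
  (rsigma : list (W -> Prop)) : pstate W :=
  match rsigma with
  | [] => B
  | p :: rs =>
      if le_dec (D (compl p)) (occ p rs)
      then @one_step m W (cb_rev m D B rs) p
      else cb_rev m D B rs
  end.

Definition iter_cb (m : method) (W : Type) (D : (W -> Prop) -> nat) (B : pstate W)
  (sigma : list (W -> Prop)) : pstate W := cb_rev m D B (rev sigma).

Definition learner (W : Type) (M : pstate W -> list (W -> Prop) -> pstate W)
  (le : W -> W -> Prop) (sigma : list (W -> Prop)) : W -> Prop :=
  let B := M (PState (fun _ => True) le) sigma in minset (st_le B) (st_S B).

Definition stream (W : Type) := nat -> (W -> Prop).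

Definition prefix (W : Type) (str : stream W) (n : nat) : list (W -> Prop) :=
  map str (seq 0 n).

Definition stream_in (W : Type) (O : (W -> Prop) -> Prop) (str : stream W) : Prop :=
  forall n, O (str n).

Definition sound_for (W : Type) (str : stream W) (s : W) : Prop :=
  forall n, str n s.

Definition complete_for (W : Type) (O : (W -> Prop) -> Prop) (str : stream W) (s : W)
  : Prop := forall o, O o -> o s -> exists n, str n = o.

Definition identifies_world (W : Type) (O : (W -> Prop) -> Prop)
  (L : list (W -> Prop) -> W -> Prop) (s : W) : Prop :=
  forall str : stream W, stream_in O str -> sound_for str s -> complete_for O str s ->
    exists k, forall n, k <= n -> forall w, L (prefix str n) w <-> w = s.

Definition identifies (W : Type) (O : (W -> Prop) -> Prop)
  (L : list (W -> Prop) -> W -> Prop) : Prop :=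
  forall s : W, identifies_world O L s.

Definition identifiable_by (W : Type) (O : (W -> Prop) -> Prop)
  (M : pstate W -> list (W -> Prop) -> pstate W) : Prop :=
  exists le : W -> W -> Prop, total_preorder le /\ identifies O (learner M le).

Definition identifiable (m : method) (W : Type) (O : (W -> Prop) -> Prop) : Prop :=
  identifiable_by O (@iter_rev m W).

Definition identifiable_CB (m : method) (W : Type) (D : (W -> Prop) -> nat)
  (O : (W -> Prop) -> Prop) : Prop :=
  identifiable_by O (@iter_cb m W D).

From Stdlib Require Import List Arith Lia Setoid Classical ClassicalDescription.
Import ListNotations.
Set Implicit Arguments.

(* (i) Each one-step revision is idempotent: revising twice by p gives the same
   state as revising once.  Given a stream for s, repeat its i-th observation
   D(not p_i) + 1 times.  The stuttered stream is still sound and complete for s,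
   the last copy of every block passes the stubbornness test, and the other
   copies either do nothing or repeat a revision.  So at the end of the i-th
   block the biased method is in the state of the unbiased one after i + 1
   observations, and the unbiased learner converges whenever the biased one does.

   (ii) Take the worlds true and false, observables "everything" and {false},
   the prior true < false and D = 1.  The unbiased method adopts false as soon
   as {false} is observed, whereas the biased one ignores the first occurrence
   of every observable, so it ends up in the same state on the stream for true
   (everything, everything, ...) and on the one for false ({false}, everything,
   everything, ...). *)

Definition pequiv W (B1 B2 : pstate W) : Prop :=
  (forall w, st_S B1 w <-> st_S B2 w) /\ (forall t w, st_le B1 t w <-> st_le B2 t w).

Lemma pequiv_refl W (B : pstate W) : pequiv B B.
Proof. split; reflexivity. Qed.

Lemma pequiv_sym W (B1 B2 : pstate W) : pequiv B1 B2 -> pequiv B2 B1.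
Proof. intros [HS Hle]; split; symmetry; auto. Qed.

Lemma pequiv_trans W (B1 B2 B3 : pstate W) :
  pequiv B1 B2 -> pequiv B2 B3 -> pequiv B1 B3.
Proof. intros [HS1 Hle1] [HS2 Hle2]; split; intros; rewrite ?HS1, ?Hle1; auto. Qed.

Lemma minset_ext W (le1 le2 : W -> W -> Prop) (X1 X2 : W -> Prop) :
  (forall t w, le1 t w <-> le2 t w) -> (forall w, X1 w <-> X2 w) ->
  forall w, minset le1 X1 w <-> minset le2 X2 w.
Proof. intros Hle HX w; unfold minset; setoid_rewrite Hle; setoid_rewrite HX; reflexivity. Qed.

Lemma minset_pequiv W (B1 B2 : pstate W) : pequiv B1 B2 ->
  forall w, minset (st_le B1) (st_S B1) w <-> minset (st_le B2) (st_S B2) w.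
Proof. intros [HS Hle]; apply minset_ext; assumption. Qed.

(* The order of [mini1 B p], with [m] the best [p]-worlds. *)
Definition promote W (m : W -> Prop) (le : W -> W -> Prop) (t w : W) : Prop :=
  (m t /\ ~ m w) \/ (~ (m t /\ ~ m w) /\ ~ (~ m t /\ m w) /\ le t w).

Lemma minset_promote W (le : W -> W -> Prop) (X : W -> Prop) x :
  minset (promote (minset le X) le) X x <-> minset le X x.
Proof.
  set (m := minset le X); unfold promote; split.
  - intros [Hx Hmin]. apply NNPP; intros Hmx.
    destruct (classic (exists y, m y)) as [[y Hmy] | Hnone].
    + destruct (Hmin y (proj1 Hmy) (or_introl (conj Hmy Hmx))) as [[? _] | [_ [? _]]];
        tauto.
    + apply Hmx; split; [assumption|]. intros y Hy Hyx.
      assert (Hmy : ~ m y) by eauto.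
      destruct (Hmin y Hy) as [[? _] | [_ [_ ?]]]; tauto.
  - intros Hmx. split; [apply Hmx|]. intros y Hy [[_ ?] | [_ [Hnot Hyx]]]; [contradiction|].
    assert (Hmy : m y) by (apply NNPP; tauto).
    right; split; [tauto|split; [tauto|]]. apply Hmx; assumption.
Qed.

Lemma one_step_pequiv m W (B1 B2 : pstate W) p :
  pequiv B1 B2 -> pequiv (one_step m B1 p) (one_step m B2 p).
Proof.
  intros [HS Hle]; destruct m; split; simpl; intros; rewrite ?HS, ?Hle; try reflexivity.
  assert (Hbest : forall x, minset (st_le B1) (fun w => st_S B1 w /\ p w) x <->
                            minset (st_le B2) (fun w => st_S B2 w /\ p w) x).
  { apply minset_ext; [assumption|intros; rewrite HS; reflexivity]. }
  rewrite !Hbest; reflexivity.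
Qed.

Lemma one_step_idem m W (B : pstate W) p :
  pequiv (one_step m (one_step m B p) p) (one_step m B p).
Proof.
  destruct m; split; simpl; intros; try tauto.
  set (X := fun w => st_S B w /\ p w).
  change (promote (minset (promote (minset (st_le B) X) (st_le B)) X)
            (promote (minset (st_le B) X) (st_le B)) t w <->
          promote (minset (st_le B) X) (st_le B) t w).
  unfold promote at 1. rewrite !minset_promote. unfold promote; tauto.
Qed.

Lemma prefix_S W (str : stream W) n : prefix str (S n) = prefix str n ++ [str n].
Proof. unfold prefix; rewrite seq_S, map_app; reflexivity. Qed.

Lemma rev_prefix_S W (str : stream W) n : rev (prefix str (S n)) = str n :: rev (prefix str n).
Proof. rewrite prefix_S, rev_app_distr; reflexivity. Qed.

Lemma iter_rev_prefix_S m W (B : pstate W) (str : stream W) n :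
  iter_rev m B (prefix str (S n)) = one_step m (iter_rev m B (prefix str n)) (str n).
Proof. unfold iter_rev; rewrite prefix_S, fold_left_app; reflexivity. Qed.

Lemma iter_cb_prefix_S m W D (B : pstate W) (str : stream W) n :
  iter_cb m D B (prefix str (S n)) =
  if le_dec (D (compl (str n))) (occ (str n) (rev (prefix str n)))
  then one_step m (iter_cb m D B (prefix str n)) (str n)
  else iter_cb m D B (prefix str n).
Proof. unfold iter_cb; rewrite rev_prefix_S; reflexivity. Qed.

Lemma occ_cons_self W (p : W -> Prop) l : occ p (p :: l) = S (occ p l).
Proof. simpl; destruct (excluded_middle_informative (p = p)); [reflexivity|contradiction]. Qed.

(* [stutter_pos d n = (i, r)]: position [n] lies in the [i]-th block, of length
   [d i + 1], and [r] more positions of that block follow it. *)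
Fixpoint stutter_pos (d : nat -> nat) (n : nat) : nat * nat :=
  match n with
  | 0 => (0, d 0)
  | S n' => match stutter_pos d n' with
            | (i, 0) => (S i, d (S i))
            | (i, S r) => (i, r)
            end
  end.

Definition stutter W (d : nat -> nat) (str : stream W) : stream W :=
  fun n => str (fst (stutter_pos d n)).

Lemma stutter_at W {d} (str : stream W) {n i r} :
  stutter_pos d n = (i, r) -> stutter d str n = str i.
Proof. unfold stutter; intros ->; reflexivity. Qed.

Lemma stutter_pos_fst_le d n : fst (stutter_pos d n) <= n.
Proof.
  induction n as [|n IH]; simpl; [reflexivity|].
  destruct (stutter_pos d n) as [i [|r]]; simpl in *; lia.
Qed.

Lemma stutter_pos_countdown d r : forall n i,
  stutter_pos d n = (i, r) -> stutter_pos d (n + r) = (i, 0).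
Proof.
  induction r as [|r IH]; intros n i Hn.
  - rewrite Nat.add_0_r; assumption.
  - rewrite <- Nat.add_succ_comm. apply IH; simpl; rewrite Hn; reflexivity.
Qed.

Lemma stutter_pos_block_end d i : exists n, stutter_pos d n = (i, 0).
Proof.
  induction i as [|i [n Hn]].
  - exists (0 + d 0); apply stutter_pos_countdown; reflexivity.
  - exists (S n + d (S i)); apply stutter_pos_countdown; simpl; rewrite Hn; reflexivity.
Qed.

Lemma stutter_pos_occ W (str : stream W) {d n} : forall i r,
  stutter_pos d n = (i, r) -> d i <= occ (str i) (rev (prefix (stutter d str) n)) + r.
Proof.
  induction n as [|n IH]; intros i r Hn; simpl in Hn.
  - injection Hn as <- <-; lia.
  - destruct (stutter_pos d n) as [i0 [|r0]] eqn:E; injection Hn as <- <-; [lia|].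
    rewrite rev_prefix_S, (stutter_at str E), occ_cons_self.
    specialize (IH _ _ eq_refl); lia.
Qed.

Section StutterInvariant.

Variables (m : method) (W : Type) (D : (W -> Prop) -> nat) (B : pstate W) (str : stream W).

Let d i := D (compl (str i)).
Let biased n := iter_cb m D B (prefix (stutter d str) n).
Let unbiased i := iter_rev m B (prefix str i).

Lemma revise_again X i :
  pequiv X (unbiased i) \/ pequiv X (unbiased (S i)) ->
  pequiv (one_step m X (str i)) (unbiased (S i)).
Proof.
  unfold unbiased; rewrite iter_rev_prefix_S; intros [HX | HX].
  - apply one_step_pequiv, HX.
  - eapply pequiv_trans; [apply one_step_pequiv, HX|apply one_step_idem].
Qed.

Lemma iter_cb_stutter_step n i r :
  stutter_pos d n = (i, r) ->
  pequiv (biased n) (unbiased i) \/ pequiv (biased n) (unbiased (S i)) ->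
  pequiv (biased (S n)) (unbiased (S i)) \/ (0 < r /\ pequiv (biased (S n)) (unbiased i)).
Proof.
  intros Hn Hprev.
  pose proof (stutter_pos_occ str Hn) as Hocc; change (d i) with (D (compl (str i))) in Hocc.
  unfold biased; rewrite iter_cb_prefix_S, (stutter_at str Hn).
  destruct (le_dec _ _) as [_ | Hclosed].
  - left; apply revise_again, Hprev.
  - destruct Hprev as [Hprev | Hprev]; [right; split; [lia|] | left]; exact Hprev.
Qed.

Lemma iter_cb_stutter n : forall i r,
  stutter_pos d n = (i, r) ->
  pequiv (biased (S n)) (unbiased (S i)) \/ (0 < r /\ pequiv (biased (S n)) (unbiased i)).
Proof.
  induction n as [|n IH]; intros i r Hn; apply iter_cb_stutter_step with (1 := Hn).
  - simpl in Hn; injection Hn as <- _; left; apply pequiv_refl.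
  - simpl in Hn; destruct (stutter_pos d n) as [i0 [|r0]] eqn:E; injection Hn as <- _;
      destruct (IH _ _ eq_refl) as [H | [Hlt H]]; auto; lia.
Qed.

End StutterInvariant.

Lemma identifiable_CB_identifiable m W D (O : (W -> Prop) -> Prop) :
  identifiable_CB m D O -> identifiable m O.
Proof.
  intros [le [Hle Hid]]; exists le; split; [assumption|].
  intros s str Hin Hsound Hcompl.
  set (d i := D (compl (str i))).
  destruct (Hid s (stutter d str)) as [k Hk].
  - intros n; apply Hin.
  - intros n; apply Hsound.
  - intros o Ho Hos. destruct (Hcompl o Ho Hos) as [i <-].
    destruct (stutter_pos_block_end d i) as [n Hn]; exists n; exact (stutter_at str Hn).
  - exists (S k); intros [|i] Hi w; [lia|].
    destruct (stutter_pos_block_end d i) as [n Hn].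
    pose proof (stutter_pos_fst_le d n) as Hin_n; rewrite Hn in Hin_n; simpl in Hin_n.
    destruct (iter_cb_stutter m D (PState (fun _ => True) le) str n Hn) as [Hend | [Hlt _]]; [|lia].
    eapply iff_trans; [|exact (Hk (S n) ltac:(lia) w)].
    apply minset_pequiv, pequiv_sym, Hend.
Qed.

Definition obs_any : bool -> Prop := fun _ => True.
Definition obs_false : bool -> Prop := fun w => w = false.
Definition obs_bool (o : bool -> Prop) : Prop := o = obs_any \/ o = obs_false.
Definition prior_true (t w : bool) : Prop := t = true \/ w = false.
Definition stubborn_once : (bool -> Prop) -> nat := fun _ => 1.

Lemma obs_any_neq_false : obs_any <> obs_false.
Proof. intros E; assert (H : obs_false true) by (rewrite <- E; exact I); discriminate. Qed.

Lemma prior_true_total : total_preorder prior_true.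
Proof.
  unfold prior_true; split; [|split].
  - intros []; auto.
  - intros [] [] []; intuition congruence.
  - intros [] []; auto.
Qed.

Lemma bool_countable : at_most_countable bool.
Proof. exists (fun b : bool => if b then 1 else 0); intros [] []; simpl; congruence. Qed.

(* The state of the unbiased method from [prior_true]; [b] records whether
   [obs_false] has been observed. *)
Definition bool_state (m : method) (b : bool) : pstate bool :=
  match b, m with
  | false, _ => PState (fun _ => True) prior_true
  | true, MCond => PState (fun w => w = false) (fun t w => t = false /\ w = false)
  | true, _ => PState (fun _ => True) (fun t w => t = false \/ w = true)
  end.

Lemma minset_bool (le : bool -> bool -> Prop) (X : bool -> Prop) x :
  minset le X x <->
  X x /\ (X true -> le true x -> le x true) /\ (X false -> le false x -> le x false).
Proof.
  unfold minset; split.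
  - intros [Hx Hmin]; auto.
  - intros [Hx [Ht Hf]]; split; [assumption|intros []; assumption].
Qed.

Lemma minset_bool_state m b w :
  minset (st_le (bool_state m b)) (st_S (bool_state m b)) w <-> w = negb b.
Proof.
  rewrite minset_bool; destruct m, b, w; simpl; unfold prior_true; intuition congruence.
Qed.

Lemma best_bool_any m b w :
  minset (st_le (bool_state m b)) (fun x => st_S (bool_state m b) x /\ obs_any x) w <->
  w = negb b.
Proof.
  rewrite minset_bool; destruct m, b, w; simpl; unfold obs_any, prior_true; intuition congruence.
Qed.

Lemma best_bool_false m b w :
  minset (st_le (bool_state m b)) (fun x => st_S (bool_state m b) x /\ obs_false x) w <->
  w = false.
Proof.
  rewrite minset_bool; destruct m, b, w; simpl; unfold obs_false, prior_true; intuition congruence.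
Qed.

Lemma one_step_bool_any m b : pequiv (one_step m (bool_state m b) obs_any) (bool_state m b).
Proof.
  destruct m; split; intros; cbn [one_step cond1 lex1 mini1 st_S st_le];
    rewrite ?best_bool_any; destruct b; try destruct t; try destruct w; simpl;
    unfold obs_any, prior_true; intuition congruence.
Qed.

Lemma one_step_bool_false m b :
  pequiv (one_step m (bool_state m b) obs_false) (bool_state m true).
Proof.
  destruct m; split; intros; cbn [one_step cond1 lex1 mini1 st_S st_le];
    rewrite ?best_bool_false; destruct b; try destruct t; try destruct w; simpl;
    unfold obs_false, prior_true; intuition congruence.
Qed.

Lemma iter_rev_bool m (str : stream bool) : stream_in obs_bool str -> forall n, exists b,
  pequiv (iter_rev m (PState (fun _ => True) prior_true) (prefix str n)) (bool_state m b) /\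
  (b = true <-> exists k, k < n /\ str k = obs_false).
Proof.
  intros Hin n; induction n as [|n [b [Hb Hseen]]].
  - exists false; split; [apply pequiv_refl|].
    split; [discriminate|intros [k [Hk _]]; lia].
  - rewrite iter_rev_prefix_S.
    destruct (Hin n) as [E | E]; rewrite E.
    + exists b; split.
      * eapply pequiv_trans; [apply one_step_pequiv, Hb|apply one_step_bool_any].
      * rewrite Hseen; split; intros [k [Hk Ek]]; exists k; split; try lia; auto.
        destruct (Nat.eq_dec k n) as [-> | Hne]; [|lia].
        exfalso; apply obs_any_neq_false; congruence.
    + exists true; split.
      * eapply pequiv_trans; [apply one_step_pequiv, Hb|apply one_step_bool_false].
      * split; [intros _; exists n; split; [lia|assumption]|reflexivity].
Qed.

Lemma identifiable_bool m : identifiable m obs_bool.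
Proof.
  exists prior_true; split; [apply prior_true_total|].
  intros s str Hin Hsound Hcompl.
  assert (Hlearn : forall n b,
             pequiv (iter_rev m (PState (fun _ => True) prior_true) (prefix str n))
                    (bool_state m b) ->
             forall w, learner (@iter_rev m bool) prior_true (prefix str n) w <-> w = negb b).
  { intros n b Hb w; eapply iff_trans; [apply minset_pequiv, Hb|apply minset_bool_state]. }
  destruct s.
  - exists 0; intros n _ w.
    destruct (@iter_rev_bool m str Hin n) as [[|] [Hb Hseen]]; [|exact (Hlearn _ _ Hb w)].
    destruct (proj1 Hseen eq_refl) as [k [_ Ek]].
    specialize (Hsound k); rewrite Ek in Hsound; discriminate.
  - destruct (Hcompl obs_false (or_intror eq_refl) eq_refl) as [n0 E0].
    exists (S n0); intros n Hn w.
    destruct (@iter_rev_bool m str Hin n) as [b [Hb Hseen]].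
    replace b with true in Hb by (symmetry; apply Hseen; exists n0; split; [lia|assumption]).
    exact (Hlearn _ _ Hb w).
Qed.

Definition stream_true : stream bool := fun _ => obs_any.
Definition stream_false : stream bool := fun n => match n with 0 => obs_false | S _ => obs_any end.

Lemma occ_stream_true n : occ obs_any (rev (prefix stream_true n)) = n.
Proof.
  induction n as [|n IH]; [reflexivity|].
  rewrite rev_prefix_S.
  change (stream_true n) with obs_any; rewrite occ_cons_self, IH; reflexivity.
Qed.

Lemma occ_stream_false n : occ obs_any (rev (prefix stream_false (S n))) = n.
Proof.
  induction n as [|n IH].
  - simpl; destruct (excluded_middle_informative (obs_false = obs_any)) as [E|]; [|reflexivity].
    exfalso; apply obs_any_neq_false; symmetry; exact E.
  - rewrite rev_prefix_S.
    change (stream_false (S n)) with obs_any; rewrite occ_cons_self, IH; reflexivity.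
Qed.

Lemma iter_cb_stream_true m B n :
  iter_cb m stubborn_once B (prefix stream_true (S n)) =
  Nat.iter n (fun X => one_step m X obs_any) B.
Proof.
  induction n as [|n IH]; rewrite iter_cb_prefix_S.
  - destruct (le_dec _ _) as [H|]; [unfold stubborn_once in H; simpl in H; lia|reflexivity].
  - change (stream_true (S n)) with obs_any; rewrite occ_stream_true, IH.
    destruct (le_dec _ _) as [|H]; [reflexivity|unfold stubborn_once in H; lia].
Qed.

Lemma iter_cb_stream_false m B n :
  iter_cb m stubborn_once B (prefix stream_false (S (S n))) =
  Nat.iter n (fun X => one_step m X obs_any) B.
Proof.
  induction n as [|n IH]; rewrite iter_cb_prefix_S.
  - change (stream_false 1) with obs_any; rewrite (occ_stream_false 0), iter_cb_prefix_S.
    unfold stubborn_once; simpl.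
    destruct (le_dec 1 0); [lia|reflexivity].
  - change (stream_false (S (S n))) with obs_any; rewrite occ_stream_false, IH.
    destruct (le_dec _ _) as [|H]; [reflexivity|unfold stubborn_once in H; lia].
Qed.

Lemma not_identifiable_CB_bool m : ~ identifiable_CB m stubborn_once obs_bool.
Proof.
  intros [le [_ Hid]].
  destruct (Hid true stream_true) as [k1 H1].
  - intros n; left; reflexivity.
  - intros n; exact I.
  - intros o [-> | ->] Ho; [exists 0; reflexivity|discriminate].
  - destruct (Hid false stream_false) as [k0 H0].
    + intros [|n]; [right|left]; reflexivity.
    + intros [|n]; [reflexivity|exact I].
    + intros o [-> | ->] Ho; [exists 1|exists 0]; reflexivity.
    + specialize (H1 (S (k0 + k1)) ltac:(lia) true).
      specialize (H0 (S (S (k0 + k1))) ltac:(lia) true).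
      unfold learner in H0, H1.
      rewrite iter_cb_stream_true in H1; rewrite iter_cb_stream_false in H0.
      assert (E : true = false) by (apply H0, H1; reflexivity); discriminate.
Qed.

Theorem mainTheorem1 : forall m : method,
  (forall (W : Type) (D : (W -> Prop) -> nat) (O : (W -> Prop) -> Prop),
      at_most_countable W -> inhabited W ->
      identifiable_CB m D O -> identifiable m O) /\
  (exists (W : Type) (D : (W -> Prop) -> nat) (O : (W -> Prop) -> Prop),
      at_most_countable W /\ inhabited W /\
      identifiable m O /\ ~ identifiable_CB m D O).
Proof.
  intros m; split.
  - intros W D O _ _; apply identifiable_CB_identifiable.
  - exists bool, stubborn_once, obs_bool.
    exact (conj bool_countable (conj (inhabits true)
             (conj (identifiable_bool m) (@not_identifiable_CB_bool m)))).
Qed.
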